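(* Let $x,y\in V(D^+)$ with $y\prec x$. Then either $I_s(x)\preceq y$ or $y\prec I_s(x)$. Similarly, either $I_t(y)\preceq x$ or $x\prec I_t(y)$.
   Context: $G=(V,E,w)$ is a simple, connected, undirected graph with positive edge lengths, $s,t\in V$, and $d(\cdot,\cdot)$ is the shortest path distance in $G$; $d_s(v)=d(s,v)$, $d_t(v)=d(v,t)$. $D$ is the union of all shortest $st$-paths of $G$, and $D^+$ is the directed acyclic graph obtained from $D$ by orienting every edge toward $t$ (edge $\{u,v\}$ becomes $(u,v)$ when $d_s(v)=d_s(u)+w(u,v)$). For $x,y\in V(D^+)$, $x\prec y$ means $x$ is an ancestor of $y$ in $D^+$ (there is a directed path of positive length from $x$ to $y$; a vertex is not its own ancestor), and $x\preceq y$ means $x\prec y$ or $x=y$. For $x\neq s$, a vertex $v$ is an $s$-dominator of $x$ if $v\neq x$ and every directed path from $s$ to $x$ in $D^+$ contains $v$; the $s$-immediate-dominator $I_s(x)$ is the $s$-dominator of $x$ such that every other $s$-dominator of $x$ is an $s$-dominator of $I_s(x)$ (the $s$-dominator closest to $x$). Symmetrically, for $x\neq t$, $v\neq x$ is a $t$-dominator of $x$ if every directed path from $x$ to $t$ in $D^+$ contains $v$, and $I_t(x)$ is the $t$-dominator of $x$ closest to $x$. *)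

From mathcomp Require Import all_boot all_order all_algebra.
Set Implicit Arguments. Unset Strict Implicit. Unset Printing Implicit Defensive.
Import Order.TTheory GRing.Theory Num.Theory.
Local Open Scope ring_scope.

(* A weighted graph: vertex set T (finite), adjacency e : rel T,
   edge lengths w : T -> T -> R (only meaningful on edges). *)

Definition wgraph (R : realFieldType) (T : finType) (e : rel T) (w : T -> T -> R) : Prop :=
  [/\ symmetric e, irreflexive e,
      (forall u v, e u v -> w u v = w v u),
      (forall u v, e u v -> 0 < w u v) &
      (forall u v, connect e u v)].

Fixpoint wlen (R : realFieldType) (T : finType) (w : T -> T -> R) (x : T) (p : seq T) : R :=
  match p with
  | [::] => 0
  | y :: p' => w x y + wlen w y p'
  end.

Definition is_dist (R : realFieldType) (T : finType) (e : rel T) (w : T -> T -> R)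
    (u v : T) (r : R) : Prop :=
  (exists2 p, path e u p & last u p = v /\ wlen w u p = r) /\
  (forall p, path e u p -> last u p = v -> r <= wlen w u p).

Definition shortest_st_path (R : realFieldType) (T : finType) (e : rel T) (w : T -> T -> R)
    (s t : T) (p : seq T) : Prop :=
  [/\ path e s p, uniq (s :: p), last s p = t & is_dist e w s t (wlen w s p)].

Definition D_edge (R : realFieldType) (T : finType) (e : rel T) (w : T -> T -> R)
    (s t u v : T) : Prop :=
  exists p, shortest_st_path e w s t p /\
    exists i : nat, (i < size p)%N /\
      ((nth s (s :: p) i = u /\ nth s (s :: p) i.+1 = v) \/
       (nth s (s :: p) i = v /\ nth s (s :: p) i.+1 = u)).

(* v is a vertex of D (= of D^+). *)
Definition D_vertex (R : realFieldType) (T : finType) (e : rel T) (w : T -> T -> R)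
    (s t v : T) : Prop :=
  exists2 p, shortest_st_path e w s t p & v \in s :: p.

Definition Dplus_arc (R : realFieldType) (T : finType) (e : rel T) (w : T -> T -> R)
    (s t u v : T) : Prop :=
  D_edge e w s t u v /\
  exists du dv, [/\ is_dist e w s u du, is_dist e w s v dv & dv = du + w u v].

Fixpoint dwalk (R : realFieldType) (T : finType) (e : rel T) (w : T -> T -> R)
    (s t : T) (x : T) (p : seq T) : Prop :=
  match p with
  | [::] => True
  | y :: p' => Dplus_arc e w s t x y /\ dwalk e w s t y p'
  end.

Definition anc (R : realFieldType) (T : finType) (e : rel T) (w : T -> T -> R)
    (s t x y : T) : Prop :=
  exists p, [/\ p != [::], dwalk e w s t x p & last x p = y].

Definition anceq (R : realFieldType) (T : finType) (e : rel T) (w : T -> T -> R)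
    (s t x y : T) : Prop :=
  anc e w s t x y \/ x = y.

Definition s_dom (R : realFieldType) (T : finType) (e : rel T) (w : T -> T -> R)
    (s t v x : T) : Prop :=
  v <> x /\ forall p, dwalk e w s t s p -> last s p = x -> v \in s :: p.

Definition t_dom (R : realFieldType) (T : finType) (e : rel T) (w : T -> T -> R)
    (s t v x : T) : Prop :=
  v <> x /\ forall p, dwalk e w s t x p -> last x p = t -> v \in x :: p.

Definition is_Is (R : realFieldType) (T : finType) (e : rel T) (w : T -> T -> R)
    (s t x v : T) : Prop :=
  s_dom e w s t v x /\ forall u, s_dom e w s t u x -> u <> v -> s_dom e w s t u v.

Definition is_It (R : realFieldType) (T : finType) (e : rel T) (w : T -> T -> R)
    (s t x v : T) : Prop :=
  t_dom e w s t v x /\ forall u, t_dom e w s t u x -> u <> v -> t_dom e w s t u v.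

From mathcomp Require Import all_boot all_order all_algebra.
Import Order.TTheory GRing.Theory Num.Theory.

(* Every vertex y of D^+ lies on a directed s-t walk, so an s-y walk followed
   by a y-x walk is an s-x walk, which must pass through any s-dominator v of
   x: either on its first part (then v ⪯ y) or on its second part (then
   y ≺ v). Symmetrically for t-dominators. *)

Section ShortestPathDag.
Variables (R : realFieldType) (T : finType) (e : rel T) (w : T -> T -> R) (s t : T).

Lemma wlen_cat (x : T) (p q : seq T) :
  wlen w x (p ++ q) = (wlen w x p + wlen w (last x p) q)%R.
Proof. by elim: p x => [|y p IH] x /=; rewrite ?add0r // IH addrA. Qed.

Lemma dwalk_cat (x : T) (p q : seq T) :
  dwalk e w s t x (p ++ q) <-> dwalk e w s t x p /\ dwalk e w s t (last x p) q.
Proof. by elim: p x => [|y p IH] x /=; [tauto | have := IH y; tauto]. Qed.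

Lemma last_take (x : T) (p : seq T) k :
  k <= size p -> last x (take k p) = nth x (x :: p) k.
Proof.
elim: p x k => [|y p IH] x [|k] //= lek.
by rewrite IH // (set_nth_default y).
Qed.

Lemma is_dist_take {p : seq T} :
  path e s p -> last s p = t -> is_dist e w s t (wlen w s p) ->
  forall k, is_dist e w s (last s (take k p)) (wlen w s (take k p)).
Proof.
move=> pth_p last_p [_ min_p] k.
have def_p := cat_take_drop k p.
move: pth_p; rewrite -{1}def_p cat_path => /andP[pth_take pth_drop].
split; first by exists (take k p).
move=> q pth_q last_q.
have pth_qd : path e s (q ++ drop k p) by rewrite cat_path pth_q last_q pth_drop.
have last_qd : last s (q ++ drop k p) = t by rewrite last_cat last_q -last_cat def_p.
by have := min_p _ pth_qd last_qd; rewrite -{1}def_p !wlen_cat last_q lerD2r.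
Qed.

Lemma dwalk_from_arcs (x : T) (p : seq T) :
  (forall k, k < size p ->
     Dplus_arc e w s t (nth x (x :: p) k) (nth x (x :: p) k.+1)) ->
  dwalk e w s t x p.
Proof.
elim: p x => [|y p IH] x //= arcs; split; first exact: (arcs 0).
apply: IH => k ltk; have := arcs k.+1 ltk.
by rewrite /= !(set_nth_default x y) //= ltnS ltnW.
Qed.

Lemma shortest_st_path_dwalk {p : seq T} :
  shortest_st_path e w s t p -> dwalk e w s t s p.
Proof.
move=> sp; case: (sp) => pth_p _ last_p dist_p.
apply: dwalk_from_arcs => k ltk; split; first by exists p; split=> //; exists k; split=> //; left.
exists (wlen w s (take k p)), (wlen w s (take k.+1 p)).
have := is_dist_take pth_p last_p dist_p k; rewrite last_take ?(ltnW ltk) // => dist_k.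
have := is_dist_take pth_p last_p dist_p k.+1; rewrite last_take // => dist_k1.
split=> //.
by rewrite (take_nth s ltk) -cats1 wlen_cat last_take ?(ltnW ltk) //= addr0.
Qed.

Lemma D_vertex_dwalks {v : T} : D_vertex e w s t v ->
  (exists p, dwalk e w s t s p /\ last s p = v) /\
  (exists q, dwalk e w s t v q /\ last v q = t).
Proof.
case=> p sp v_p; have := shortest_st_path_dwalk sp; case: sp => _ _ last_p _.
set k := index v (s :: p).
have lek : k <= size p by rewrite -ltnS -[(size p).+1]/(size (s :: p)) index_mem.
have last_take_k : last s (take k p) = v by rewrite last_take // nth_index.
rewrite -(cat_take_drop k p) => /dwalk_cat[walk_take walk_drop].
split; first by exists (take k p).
by exists (drop k p); rewrite -last_take_k -last_cat cat_take_drop.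
Qed.

Lemma dwalk_mem_anceq_last {x z : T} {p : seq T} :
  dwalk e w s t x p -> z \in x :: p -> anceq e w s t z (last x p).
Proof.
elim: p x => [|y p IH] x /=; first by rewrite inE => _ /eqP ->; right.
case=> arc_xy walk_p; rewrite inE => /orP[/eqP ->|z_p]; last exact: IH.
by left; exists (y :: p).
Qed.

Lemma dwalk_mem_anc {x z : T} {p : seq T} :
  dwalk e w s t x p -> z \in p -> anc e w s t x z.
Proof.
elim: p x => [|y p IH] x //=; case=> arc_xy walk_p.
rewrite inE => /orP[/eqP ->|z_p]; first by exists [:: y].
by have [q [_ walk_q last_q]] := IH y walk_p z_p; exists (y :: q).
Qed.

Lemma dwalk_cat_mem {x v : T} {p q : seq T} :
  dwalk e w s t x p -> dwalk e w s t (last x p) q -> v \in x :: p ++ q ->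
  anceq e w s t v (last x p) \/ anc e w s t (last x p) v.
Proof.
move=> walk_p walk_q; rewrite -cat_cons mem_cat => /orP[v_p|v_q].
  by left; apply: dwalk_mem_anceq_last walk_p v_p.
by right; apply: dwalk_mem_anc walk_q v_q.
Qed.

Lemma s_dom_anc_cases (v x y : T) :
  D_vertex e w s t y -> anc e w s t y x -> s_dom e w s t v x ->
  anceq e w s t v y \/ anc e w s t y v.
Proof.
move=> y_D [q [_ walk_q last_q]] [_ dom_v].
have [[p [walk_p last_p]] _] := D_vertex_dwalks y_D.
rewrite -last_p in walk_q *; apply: (dwalk_cat_mem walk_p walk_q).
by apply: dom_v; [apply/dwalk_cat | rewrite last_cat last_p].
Qed.

Lemma t_dom_anc_cases (v x y : T) :
  D_vertex e w s t x -> anc e w s t y x -> t_dom e w s t v y ->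
  anceq e w s t v x \/ anc e w s t x v.
Proof.
move=> x_D [q [_ walk_q last_q]] [_ dom_v].
have [_ [p [walk_p last_p]]] := D_vertex_dwalks x_D.
rewrite -last_q in walk_p *; apply: (dwalk_cat_mem walk_q walk_p).
by apply: dom_v; [apply/dwalk_cat | rewrite last_cat last_q].
Qed.

End ShortestPathDag.

Theorem lemma2 (R : realFieldType) (T : finType) (e : rel T) (w : T -> T -> R) (s t : T)
  (hG : wgraph e w) (x y : T)
  (hx : D_vertex e w s t x) (hy : D_vertex e w s t y)
  (hyx : anc e w s t y x) :
  (forall i, is_Is e w s t x i -> anceq e w s t i y \/ anc e w s t y i) /\
  (forall j, is_It e w s t y j -> anceq e w s t j x \/ anc e w s t x j).
Proof.
split=> [i [dom_i _] | j [dom_j _]].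
  exact: s_dom_anc_cases hy hyx dom_i.
exact: t_dom_anc_cases hx hyx dom_j.
Qed.
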